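(* Let $a\neq 0$, $b$ be integers with $\gcd(a,b)=1$, let $k\ge 1$ be an integer, and let $c_1,e_1\in\mathbb{Q}\setminus\{0\}$, $c_0,e_0\in\mathbb{Q}$. Then there is no integer $q\ge 3$ such that the polynomial identity $$S_{a,b}^k(c_1x+c_0)=e_1x^q+e_0$$ holds in $\mathbb{Q}[x]$.
   Context: The Bernoulli polynomials $B_n(x)$ are defined by $\frac{t e^{tx}}{e^t-1}=\sum_{n\ge 0}B_n(x)\frac{t^n}{n!}$. For integers $a\neq 0$, $b$ with $\gcd(a,b)=1$ and an integer $k\ge 1$, define the polynomial $$S_{a,b}^k(x):=\frac{a^k}{k+1}\left(B_{k+1}\!\left(x+\frac{b}{a}\right)-B_{k+1}\!\left(\frac{b}{a}\right)\right)\in\mathbb{Q}[x].$$ *)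

From HB Require Import structures.
From mathcomp Require Import all_boot all_order all_algebra.
Set Implicit Arguments. Unset Strict Implicit. Unset Printing Implicit Defensive.
Import Order.TTheory GRing.Theory Num.Theory.
Local Open Scope ring_scope.

(* Bernoulli numbers B_n with the convention of t/(e^t - 1) (so B_1 = -1/2),
   via the standard recurrence  sum_{j=0}^{m} C(m+1,j) B_j = 0  (m >= 1), B_0 = 1,
   i.e.  B_m = - 1/(m+1) * sum_{j<m} C(m+1,j) B_j. *)
Fixpoint bern_list (n : nat) : seq rat :=
  match n with
  | 0%N => [:: 1]
  | m.+1 =>
      let s := bern_list m in
      rcons s (- (m.+2%:R)^-1 * \sum_(j < m.+1) ('C(m.+2, j))%:R * nth 0 s j)
  end.

Definition bernoulli_number (n : nat) : rat := nth 0 (bern_list n) n.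

Definition bernoulli_poly (n : nat) : {poly rat} :=
  \sum_(j < n.+1) (('C(n, j))%:R * bernoulli_number j) *: 'X^(n - j).

Definition S_poly (a b : int) (k : nat) : {poly rat} :=
  let r : rat := b%:~R / a%:~R in
  ((a%:~R : rat) ^+ k / (k.+1)%:R) *:
    (bernoulli_poly k.+1 \Po ('X + r%:P) - (bernoulli_poly k.+1).[r]%:P).

From HB Require Import structures.
From mathcomp Require Import all_boot all_order all_algebra zify.
Set Implicit Arguments.
Unset Strict Implicit.
Unset Printing Implicit Defensive.

Import Order.TTheory GRing.Theory Num.Theory.
Local Open Scope ring_scope.

(* Undoing the affine substitutions turns the identity into
   B_{k+1}(x) = A (x - s)^q + C.  Comparing leading coefficients forces
   q = k + 1 and A = 1; the coefficients of x^k and x^(k-1) then give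
   s = -B_1 = 1/2 and s^2 = B_2 = 1/6, which is absurd. *)

Lemma coef_XsubC_exp (R : comNzRingType) (c : R) q j :
  (('X - c%:P) ^+ q)`_j = 'C(q, j)%:R * (- c) ^+ (q - j).
Proof.
rewrite -polyCN exprDn coef_sum.
under eq_bigr => i _ do rewrite coefMn -rmorphXn mulrC coefCM coefXn.
case: (leqP j q) => hjq; last first.
  rewrite bin_small // mul0r big1 // => i _.
  by case: eqP => [e|]; [lia | rewrite mulr0 mul0rn].
have hl : (q - j < q.+1)%N by lia.
rewrite (bigD1 (Ordinal hl)) //= big1 ?addr0 => [|i hi].
  by rewrite subKn // eqxx mulr1 bin_sub // mulr_natl.
case: eqP => [e|]; last by rewrite mulr0 mul0rn.
case/negP: hi; apply/eqP/val_inj => /=; have := ltn_ord i; lia.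
Qed.

Lemma coef_shifted_power (R : comNzRingType) (A s C : R) q i : (0 < i)%N ->
  (A *: ('X - s%:P) ^+ q + C%:P)`_i = A * ('C(q, i)%:R * (- s) ^+ (q - i)).
Proof. by case: i => // i _; rewrite coefD coefZ coefC coef_XsubC_exp addr0. Qed.

Lemma comp_affine_eq_monomial (F : fieldType) (p : {poly F}) (c1 c0 e1 e0 : F) q :
  c1 != 0 -> p \Po (c1 *: 'X + c0%:P) = e1 *: 'X^q + e0%:P ->
  p = (e1 / c1 ^+ q) *: ('X - c0%:P) ^+ q + e0%:P.
Proof.
move=> c1_neq0 Ep.
have inv_affine : (c1 *: 'X + c0%:P) \Po (c1^-1 *: ('X - c0%:P)) = 'X.
  by rewrite comp_polyD comp_polyZ comp_polyX comp_polyC scalerA mulfV // scale1r subrK.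
rewrite -[LHS]comp_polyXr -{1}inv_affine comp_polyA Ep.
by rewrite comp_polyD comp_polyZ comp_Xn_poly comp_polyC exprZn scalerA exprVn.
Qed.

Lemma comp_poly_shift_affine (R : comNzRingType) (p : {poly R}) r c1 c0 :
  p \Po ('X + r%:P) \Po (c1 *: 'X + c0%:P) = p \Po (c1 *: 'X + (c0 + r)%:P).
Proof. by rewrite -comp_polyA comp_polyD comp_polyX comp_polyC polyCD addrA. Qed.

Lemma coef_bernoulli_poly n i : (bernoulli_poly n)`_i =
  if (i <= n)%N then ('C(n, n - i))%:R * bernoulli_number (n - i) else 0.
Proof.
rewrite /bernoulli_poly coef_sum.
under eq_bigr => j _ do rewrite coefZ coefXn.
case: ifP => hin; last first.
  by rewrite big1 // => j _; case: eqP => [e|]; [move/negbT: hin; lia | rewrite mulr0].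
have hl : (n - i < n.+1)%N by lia.
rewrite (bigD1 (Ordinal hl)) //= big1 ?addr0 => [|j hj].
  by rewrite subKn // eqxx mulr1.
case: eqP => [e|]; last by rewrite mulr0.
case/negP: hj; apply/eqP/val_inj => /=; have := ltn_ord j; lia.
Qed.

Lemma bernoulli_number1 : bernoulli_number 1 = - 2^-1.
Proof. by rewrite /bernoulli_number /= !big_ord_recr big_ord0 /= !bin0 add0r !mul1r. Qed.

Lemma bernoulli_number2 : bernoulli_number 2 = 6^-1.
Proof.
by rewrite /bernoulli_number /= !big_ord_recr !big_ord0 /= !bin0 bin1 !add0r !mul1r; apply/eqP.
Qed.

Lemma bernoulli_poly_eq_shifted_power n q (A s C : rat) :
  bernoulli_poly n.+1 = A *: ('X - s%:P) ^+ q + C%:P -> q = n.+1 /\ A = 1.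
Proof.
move=> E; have cf i : (0 < i)%N ->
    (bernoulli_poly n.+1)`_i = A * ('C(q, i)%:R * (- s) ^+ (q - i)).
  by move=> i_gt0; rewrite E coef_shifted_power.
have lead : (bernoulli_poly n.+1)`_n.+1 = 1.
  by rewrite coef_bernoulli_poly leqnn subnn bin0 mul1r.
have := cf _ (ltn0Sn n); rewrite lead.
case: (ltngtP q n.+1) => [q_lt|q_gt|->].
- by rewrite bin_small // mul0r mulr0 => /eqP; rewrite oner_eq0.
- have := cf _ (leq_ltn_trans (leq0n n.+1) q_gt).
  rewrite coef_bernoulli_poly leqNgt q_gt binn subnn expr0 !mulr1 => <-.
  by rewrite mul0r => /eqP; rewrite oner_eq0.
- by rewrite binn subnn expr0 !mulr1.
Qed.

Lemma bernoulli_poly_neq_shifted_power n q (A s C : rat) : (3 <= q)%N ->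
  bernoulli_poly n.+1 != A *: ('X - s%:P) ^+ q + C%:P.
Proof.
move=> q_ge3; apply/eqP => E.
have [q_eq A1] := bernoulli_poly_eq_shifted_power E; subst q A.
case: n q_ge3 E => [|[|m]] // _ E.
have cf i : (0 < i)%N ->
    (bernoulli_poly m.+3)`_i = 'C(m.+3, i)%:R * (- s) ^+ (m.+3 - i).
  by move=> i_gt0; rewrite E coef_shifted_power // mul1r.
have binS_neq0 i : (i <= m.+3)%N -> 'C(m.+3, i)%:R != 0 :> rat.
  by move=> le_i; rewrite pnatr_eq0 -lt0n bin_gt0.
have s_half : s = 2^-1.
  have := cf m.+2 isT; rewrite coef_bernoulli_poly (leqnSn m.+2).
  rewrite (bin_sub (leqnSn _)) subSnn bernoulli_number1 expr1.
  by move/(mulfI (binS_neq0 _ (leqnSn _)))/oppr_inj.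
have := cf m.+1 isT; rewrite coef_bernoulli_poly (leqW (leqnSn m.+1)).
rewrite (bin_sub (leqW (leqnSn _))) (_ : m.+3 - m.+1 = 2)%N; last by lia.
rewrite bernoulli_number2 s_half sqrrN.
move/(mulfI (binS_neq0 _ (leqW (leqnSn _)))).
by move/eqP; rewrite expr2 -invfM (inj_eq (can_inj invrK)).
Qed.

Theorem lemma3 (a b : int) (k : nat) (c1 c0 e1 e0 : rat) :
  a != 0 -> gcdz a b = 1%N -> (1 <= k)%N -> c1 != 0 -> e1 != 0 ->
  ~ exists q : nat, (3 <= q)%N /\
      S_poly a b k \Po (c1 *: 'X + c0%:P) = e1 *: 'X^q + e0%:P.
Proof.
move=> a_neq0 _ _ c1_neq0 _ [q [q_ge3 ES]].
move: ES; rewrite /S_poly.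
set r : rat := b%:~R / a%:~R; set l : rat := a%:~R ^+ k / k.+1%:R.
set P := bernoulli_poly k.+1.
have l_neq0 : l != 0 by rewrite mulf_neq0 ?expf_neq0 ?invr_eq0 ?intr_eq0 ?pnatr_eq0.
rewrite comp_polyZ comp_polyB comp_polyC comp_poly_shift_affine => ES.
have EP : P \Po (c1 *: 'X + (c0 + r)%:P) =
    (l^-1 * e1) *: 'X^q + (l^-1 * e0 + P.[r])%:P.
  rewrite -[LHS](subrK P.[r]%:P) -[_ - _](scalerK l_neq0) ES.
  by rewrite scalerDr scalerA polyCD addrA polyCM mul_polyC.
have := bernoulli_poly_neq_shifted_power k (l^-1 * e1 / c1 ^+ q) (c0 + r)
  (l^-1 * e0 + P.[r]) q_ge3.
by rewrite -(comp_affine_eq_monomial c1_neq0 EP) eqxx.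
Qed.
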